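(* Let $(G,d)$ be a boundedly compact $p$-uniformly convex metric space with $p=c=2$, $f:G\to\mathbb{R}$ proper, convex and lower semicontinuous, $\lambda>0$, and $\tau\in(0,1/2]$. Then the relaxed prox mapping $T_\tau=(1-\tau)\mathrm{Id}\oplus\tau\,\mathrm{prox}^2_{f,\lambda}$ is $\alpha$-firmly nonexpansive on $G$ with constant $\alpha_\tau=1-\tau$, i.e. $d(T_\tau x,T_\tau y)^2\le d(x,y)^2-\frac{\tau}{1-\tau}\psi^{(2,2)}(x,y,T_\tau x,T_\tau y)$ for all $x,y\in G$.
   Context: $(G,d)$ uniquely geodesic with $d(z,(1-\tau)x\oplus\tau y)^2\le(1-\tau)d(z,x)^2+\tau d(z,y)^2-\tau(1-\tau)d(x,y)^2$ for all $\tau\in[0,1]$, $x,y,z$, where $(1-\tau)x\oplus\tau y$ is the point on the geodesic from $x$ to $y$ at distance $\tau d(x,y)$ from $x$; $T_\tau(x)=(1-\tau)x\oplus\tau\,\mathrm{prox}^2_{f,\lambda}(x)$. $f$ convex: $f((1-\tau)x\oplus\tau y)\le(1-\tau)f(x)+\tau f(y)$. $\mathrm{prox}^2_{f,\lambda}(x)=\operatorname{argmin}_y\{f(y)+\frac1{2\lambda}d(y,x)^2\}$. $\psi^{(2,2)}(x,y,u,v)=d(x,u)^2+d(y,v)^2+d(u,v)^2+d(x,y)^2-d(y,u)^2-d(x,v)^2$. *)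

From Stdlib Require Import Reals Lra ClassicalEpsilon.
Open Scope R_scope.

Section MetricDefs.
Context {G : Type} (d : G -> G -> R).

Definition is_metric : Prop :=
  (forall x y, d x y = 0 <-> x = y) /\
  (forall x y, d x y = d y x) /\
  (forall x y z, d x z <= d x y + d y z).

Definition is_geodesic (x y : G) (g : R -> G) : Prop :=
  g 0 = x /\ g (d x y) = y /\
  forall s t, 0 <= s <= d x y -> 0 <= t <= d x y -> d (g s) (g t) = Rabs (s - t).

Definition uniquely_geodesic : Prop :=
  forall x y, (exists g, is_geodesic x y g) /\
    forall g1 g2, is_geodesic x y g1 -> is_geodesic x y g2 ->
      forall t, 0 <= t <= d x y -> g1 t = g2 t.

(* (1-t) x (+) t y : the point on the (chosen) geodesic from x to y at
   distance t * d x y from x (well defined when the space is uniquely geodesic) *)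
Definition geo_comb (x y : G) (t : R) : G :=
  match excluded_middle_informative (exists g, is_geodesic x y g) with
  | left h => (proj1_sig (constructive_indefinite_description _ h)) (t * d x y)
  | right _ => x
  end.

Definition unif_convex_2 : Prop :=
  forall (t : R) x y z, 0 <= t <= 1 ->
    (d z (geo_comb x y t))^2 <=
      (1 - t) * (d z x)^2 + t * (d z y)^2 - t * (1 - t) * (d x y)^2.

Definition seq_conv (u : nat -> G) (x : G) : Prop :=
  forall e, 0 < e -> exists N, forall n, (N <= n)%nat -> d (u n) x < e.

(* boundedly compact: every closed ball is (sequentially, equivalently in a
   metric space) compact *)
Definition boundedly_compact : Prop :=
  forall (c : G) (r : R) (u : nat -> G), (forall n, d c (u n) <= r) ->
    exists (phi : nat -> nat) (x : G),
      (forall n, (phi n < phi (S n))%nat) /\ d c x <= r /\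
      seq_conv (fun n => u (phi n)) x.

Definition lsc (f : G -> R) : Prop :=
  forall u x, seq_conv u x ->
    forall e, 0 < e -> exists N, forall n, (N <= n)%nat -> f x - e < f (u n).

Definition convex_fun (f : G -> R) : Prop :=
  forall (t : R) x y, 0 <= t <= 1 ->
    f (geo_comb x y t) <= (1 - t) * f x + t * f y.

(* the prox mapping: argmin_y f y + d(y,x)^2 / (2 lam) (a chosen minimizer;
   defaults to x if no minimizer exists) *)
Definition is_prox_point (f : G -> R) (lam : R) (x p : G) : Prop :=
  forall y, f p + (d p x)^2 / (2 * lam) <= f y + (d y x)^2 / (2 * lam).

Definition prox (f : G -> R) (lam : R) (x : G) : G :=
  match excluded_middle_informative (exists p, is_prox_point f lam x p) with
  | left h => proj1_sig (constructive_indefinite_description _ h)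
  | right _ => x
  end.

Definition T_relax (f : G -> R) (lam tau : R) (x : G) : G :=
  geo_comb x (prox f lam x) tau.

Definition psi22 (x y u v : G) : R :=
  (d x u)^2 + (d y v)^2 + (d u v)^2 + (d x y)^2 - (d y u)^2 - (d x v)^2.

End MetricDefs.

From Stdlib Require Import Reals Lra Psatz Lia ClassicalEpsilon Classical.
Open Scope R_scope.

(* The prox points p, q of x, y satisfy the quadrilateral form of firm
   nonexpansiveness  d(x,p)^2 + d(y,q)^2 + 2 d(p,q)^2 <= d(x,q)^2 + d(y,p)^2,
   obtained by adding their variational inequalities.  Uniform convexity and
   the Berg-Nikolaev quadrilateral inequality show that this property survives
   the relaxation x |-> (1 - tau) x (+) tau p when tau <= 1/2.  For the relaxed
   points u, v it says psi(x, y, u, v) <= d(x,y)^2 - d(u,v)^2; since psi >= 0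
   and tau / (1 - tau) <= 1, the claim follows.  Prox points exist by bounded
   compactness: the prox objective is lower semicontinuous and coercive, since
   a convex function bounded below on a ball has an affine minorant in d(x, .). *)

Section Geometry.

Variables (G : Type) (d : G -> G -> R).
Hypothesis Hmetric : is_metric d.
Hypothesis Hgeo : uniquely_geodesic d.
Hypothesis Hconv : unif_convex_2 d.

Lemma dist_refl x : d x x = 0.
Proof. apply (proj1 Hmetric). reflexivity. Qed.

Lemma dist_sym x y : d x y = d y x.
Proof. apply (proj1 (proj2 Hmetric)). Qed.

Lemma dist_triangle x y z : d x z <= d x y + d y z.
Proof. apply (proj2 (proj2 Hmetric)). Qed.

Lemma dist_ge0 x y : 0 <= d x y.
Proof.
  pose proof (dist_triangle x y x) as h.
  rewrite dist_refl, (dist_sym y x) in h. lra.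
Qed.

Lemma sqr_dist_sym x y : d x y ^ 2 = d y x ^ 2.
Proof. now rewrite dist_sym. Qed.

Lemma geo_comb_spec x y :
  exists g, is_geodesic d x y g /\ forall t, geo_comb d x y t = g (t * d x y).
Proof.
  unfold geo_comb.
  destruct (excluded_middle_informative _) as [h | h].
  - exists (proj1_sig (constructive_indefinite_description _ h)).
    split; [exact (proj2_sig (constructive_indefinite_description _ h)) | reflexivity].
  - exfalso. exact (h (proj1 (Hgeo x y))).
Qed.

Lemma dist_geo_comb x y t : 0 <= t <= 1 ->
  d x (geo_comb d x y t) = t * d x y /\ d (geo_comb d x y t) y = (1 - t) * d x y.
Proof.
  intros Ht.
  destruct (geo_comb_spec x y) as [g [[g0 [g1 giso]] ->]].
  pose proof (dist_ge0 x y).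
  assert (0 <= t * d x y <= d x y) by nra.
  split.
  - rewrite <- g0 at 1. rewrite giso, Rabs_left1 by lra. ring.
  - rewrite <- g1 at 2. rewrite giso, Rabs_left1 by nra. ring.
Qed.

(* Uniqueness of geodesics: the initial piece of the geodesic from x to p is
   the geodesic from x to its endpoint. *)
Lemma geo_comb_geo_comb x p s k : 0 <= s <= 1 -> 0 <= k <= 1 ->
  geo_comb d x (geo_comb d x p s) k = geo_comb d x p (k * s).
Proof.
  intros Hs Hk.
  destruct (geo_comb_spec x p) as [g [[g0 [g1 giso]] Eg]].
  set (w := geo_comb d x p s).
  assert (dw : d x w = s * d x p) by exact (proj1 (dist_geo_comb x p s Hs)).
  pose proof (dist_ge0 x p).
  assert (gw : is_geodesic d x w g).
  { split; [exact g0 |]. split.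
    - rewrite dw. unfold w. now rewrite Eg.
    - intros a b Ha Hb. rewrite dw in Ha, Hb. apply giso; nra. }
  destruct (geo_comb_spec x w) as [h [hw ->]].
  rewrite (proj2 (Hgeo x w) h g hw gw).
  - rewrite Eg, dw. f_equal. ring.
  - rewrite dw. assert (0 <= s * d x p) by nra. split; nra.
Qed.

(* Berg-Nikolaev quadrilateral inequality: compare b and e with the midpoint
   of [a, c]. *)
Lemma quadrilateral_ineq a b c e :
  d a c ^ 2 + d b e ^ 2 <= d a b ^ 2 + d b c ^ 2 + d c e ^ 2 + d e a ^ 2.
Proof.
  set (m := geo_comb d a c (1 / 2)).
  pose proof (Hconv (1 / 2) a c b ltac:(lra)) as hb.
  pose proof (Hconv (1 / 2) a c e ltac:(lra)) as he.
  fold m in hb, he.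
  pose proof (dist_triangle b m e) as htri.
  pose proof (dist_ge0 b m). pose proof (dist_ge0 m e). pose proof (dist_ge0 b e).
  rewrite (sqr_dist_sym b a) in hb. rewrite (sqr_dist_sym e c), (sqr_dist_sym e m) in he.
  assert (d b e ^ 2 <= (d b m + d m e) ^ 2) by (apply pow_incr; lra).
  assert (0 <= (d b m - d m e) ^ 2) by apply pow2_ge_0.
  lra.
Qed.

Lemma psi22_ge0 x y u v : 0 <= psi22 d x y u v.
Proof.
  unfold psi22.
  pose proof (quadrilateral_ineq x u v y).
  rewrite (sqr_dist_sym u y), (sqr_dist_sym v y), (sqr_dist_sym y x) in *.
  lra.
Qed.

(* Distance form of firm nonexpansiveness: in a Hilbert space the inequality
   reads <(x - y) - (p - q), p - q> >= 0. *)
Definition quad_firm (x y p q : G) : Prop :=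
  d x p ^ 2 + d y q ^ 2 + 2 * d p q ^ 2 <= d x q ^ 2 + d y p ^ 2.

Lemma psi22_le_of_quad_firm x y u v :
  quad_firm x y u v -> psi22 d x y u v <= d x y ^ 2 - d u v ^ 2.
Proof. unfold quad_firm, psi22. rewrite (sqr_dist_sym y u). lra. Qed.

(* With u, v the points at t and w, z the points at 1 - t on [x, p], [y, q]:
   add the quadrilateral inequalities for x v q w and y u p z, bound d q w and
   d p z by convexity along [x, p] and [y, q], and use quad_firm x y p q. *)
Lemma sqr_dist_cross_geo_comb x y p q t : 0 <= t <= 1 -> quad_firm x y p q ->
  d (geo_comb d x p t) (geo_comb d y q (1 - t)) ^ 2 +
  d (geo_comb d x p (1 - t)) (geo_comb d y q t) ^ 2 <=
  d x (geo_comb d y q t) ^ 2 + d y (geo_comb d x p t) ^ 2 +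
  (1 - t) * (1 - 3 * t) * (d x p ^ 2 + d y q ^ 2).
Proof.
  intros Ht Hpq. unfold quad_firm in Hpq.
  set (u := geo_comb d x p t). set (v := geo_comb d y q t).
  set (w := geo_comb d x p (1 - t)). set (z := geo_comb d y q (1 - t)).
  destruct (dist_geo_comb x p t Ht) as [_ dup]. fold u in dup.
  destruct (dist_geo_comb y q t Ht) as [_ dvq]. fold v in dvq.
  destruct (dist_geo_comb x p (1 - t) ltac:(lra)) as [dxw _]. fold w in dxw.
  destruct (dist_geo_comb y q (1 - t) ltac:(lra)) as [dyz _]. fold z in dyz.
  pose proof (quadrilateral_ineq x v q w) as qx.
  pose proof (quadrilateral_ineq y u p z) as qy.
  pose proof (Hconv (1 - t) x p q ltac:(lra)) as cw. fold w in cw.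
  pose proof (Hconv (1 - t) y q p ltac:(lra)) as cz. fold z in cz.
  rewrite (sqr_dist_sym w x), dxw, dvq, (sqr_dist_sym q w), (sqr_dist_sym v w) in qx.
  rewrite (sqr_dist_sym z y), dyz, dup, (sqr_dist_sym p z) in qy.
  rewrite (sqr_dist_sym q w), (sqr_dist_sym q x), (sqr_dist_sym q p) in cw.
  rewrite (sqr_dist_sym p z), (sqr_dist_sym p y) in cz.
  assert (hq := Rmult_le_compat_l (1 - t) _ _ ltac:(lra) Hpq).
  lra.
Qed.

(* With w, z the points at 1 - t on [x, p], [y, q] and k (1 - t) = t, the
   relaxed points are u = (1 - k) x (+) k w and v = (1 - k) y (+) k z; this is
   where t <= 1/2 (i.e. k <= 1) is needed. *)
Lemma quad_firm_geo_comb x y p q t : 0 <= t <= 1 / 2 -> quad_firm x y p q ->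
  quad_firm x y (geo_comb d x p t) (geo_comb d y q t).
Proof.
  intros Ht Hpq.
  pose proof (sqr_dist_cross_geo_comb x y p q t ltac:(lra) Hpq) as Hcross.
  unfold quad_firm in *.
  set (k := t / (1 - t)).
  assert (hk : k * (1 - t) = t) by (unfold k; field; lra).
  assert (hk01 : 0 <= k <= 1).
  { unfold k. split.
    - apply Rmult_le_pos; [lra | apply Rlt_le, Rinv_0_lt_compat; lra].
    - apply Rmult_le_reg_r with (1 - t); [lra |]. fold k. rewrite hk. lra. }
  set (u := geo_comb d x p t) in *. set (v := geo_comb d y q t) in *.
  set (w := geo_comb d x p (1 - t)) in *. set (z := geo_comb d y q (1 - t)) in *.
  set (a := d x p ^ 2) in *. set (b := d y q ^ 2) in *.
  assert (Eu : geo_comb d x w k = u).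
  { unfold w, u. rewrite geo_comb_geo_comb, hk by lra. reflexivity. }
  assert (Ev : geo_comb d y z k = v).
  { unfold z, v. rewrite geo_comb_geo_comb, hk by lra. reflexivity. }
  assert (Exu : d x u ^ 2 = t ^ 2 * a).
  { unfold u, a. rewrite (proj1 (dist_geo_comb x p t ltac:(lra))). ring. }
  assert (Eyv : d y v ^ 2 = t ^ 2 * b).
  { unfold v, b. rewrite (proj1 (dist_geo_comb y q t ltac:(lra))). ring. }
  assert (Exw : d x w ^ 2 = (1 - t) ^ 2 * a).
  { unfold w, a. rewrite (proj1 (dist_geo_comb x p (1 - t) ltac:(lra))). ring. }
  assert (Eyz : d y z ^ 2 = (1 - t) ^ 2 * b).
  { unfold z, b. rewrite (proj1 (dist_geo_comb y q (1 - t) ltac:(lra))). ring. }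
  pose proof (Hconv k x w v hk01) as cu. rewrite Eu, Exw in cu.
  pose proof (Hconv k y z u hk01) as cv. rewrite Ev, Eyz in cv.
  rewrite (sqr_dist_sym v u), (sqr_dist_sym v x), (sqr_dist_sym v w) in cu.
  rewrite (sqr_dist_sym u y) in cv.
  assert (hkc := Rmult_le_compat_l k _ _ (proj1 hk01) Hcross).
  replace (k * (1 - k) * ((1 - t) ^ 2 * a)) with ((k * (1 - t)) * (1 - 2 * t) * a) in cu
    by (unfold k; field; lra).
  replace (k * (1 - k) * ((1 - t) ^ 2 * b)) with ((k * (1 - t)) * (1 - 2 * t) * b) in cv
    by (unfold k; field; lra).
  replace (k * (d x v ^ 2 + d y u ^ 2 + (1 - t) * (1 - 3 * t) * (a + b)))
    with (k * (d x v ^ 2 + d y u ^ 2) + (k * (1 - t)) * (1 - 3 * t) * (a + b))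
    in hkc by ring.
  rewrite hk in cu, cv, hkc. rewrite Exu, Eyv.
  lra.
Qed.

End Geometry.

Lemma le_of_forall_one_minus_mul_le (P D : R) :
  (forall t, 0 < t <= 1 -> (1 - t) * P <= D) -> P <= D.
Proof.
  intros H. destruct (Rle_or_lt P D) as [h | h]; [exact h | exfalso].
  pose proof (H 1 ltac:(lra)) as h1.
  assert (hP : 0 < P) by lra.
  assert (ht : 0 < (P - D) / (2 * P) <= 1).
  { split.
    - apply Rdiv_lt_0_compat; lra.
    - apply Rmult_le_reg_r with (2 * P); [lra |]. field_simplify; lra. }
  pose proof (H _ ht) as h2.
  replace ((1 - (P - D) / (2 * P)) * P) with ((P + D) / 2) in h2 by (field; lra).
  lra.
Qed.

Lemma strict_incr_ge_id (phi : nat -> nat) :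
  (forall n, (phi n < phi (S n))%nat) -> forall n, (n <= phi n)%nat.
Proof. intros H n. induction n; [lia |]. specialize (H n). lia. Qed.

Section LowerSemicontinuity.

Variables (G : Type) (d : G -> G -> R).
Hypothesis Hmetric : is_metric d.
Hypothesis Hbc : boundedly_compact d.

Lemma lsc_plus (g h : G -> R) : lsc d g -> lsc d h -> lsc d (fun z => g z + h z).
Proof.
  intros Hg Hh u z Hu e he.
  destruct (Hg u z Hu (e / 2) ltac:(lra)) as [N1 HN1].
  destruct (Hh u z Hu (e / 2) ltac:(lra)) as [N2 HN2].
  exists (N1 + N2)%nat. intros n hn.
  specialize (HN1 n ltac:(lia)). specialize (HN2 n ltac:(lia)). lra.
Qed.

Lemma lsc_div (g : G -> R) (c : R) : 0 < c -> lsc d g -> lsc d (fun z => g z / c).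
Proof.
  intros Hc Hg u z Hu e he.
  destruct (Hg u z Hu (e * c) ltac:(nra)) as [N HN].
  exists N. intros n hn. specialize (HN n hn).
  apply Rmult_lt_reg_r with c; [exact Hc |].
  unfold Rdiv. rewrite Rmult_minus_distr_r, !Rmult_assoc, Rinv_l by lra. lra.
Qed.

Lemma lsc_sqr_dist (x : G) : lsc d (fun z => d z x ^ 2).
Proof.
  intros u z Hu e he.
  set (D := d z x).
  assert (hD : 0 <= D) by apply (dist_ge0 G d Hmetric).
  destruct (Hu (e / (2 * D + 1)) ltac:(apply Rdiv_lt_0_compat; lra)) as [N HN].
  exists N. intros n hn. specialize (HN n hn).
  pose proof (dist_triangle G d Hmetric z (u n) x) as htri.
  rewrite (dist_sym G d Hmetric z (u n)) in htri. fold D in htri.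
  pose proof (dist_ge0 G d Hmetric (u n) x).
  assert (hdelta : e / (2 * D + 1) * (2 * D + 1) = e) by (field; lra).
  destruct (Rle_or_lt D (d (u n) x)) as [h | h]; [nra |].
  assert ((D - d (u n) x) * (D + d (u n) x) <= e / (2 * D + 1) * (2 * D + 1)).
  { apply Rmult_le_compat; nra. }
  nra.
Qed.

Lemma lsc_bounded_below_on_ball (g : G -> R) : lsc d g ->
  forall c r, exists m, forall z, d c z <= r -> m <= g z.
Proof.
  intros Hg c r. apply NNPP. intros Hno.
  assert (H : forall n : nat, exists z, d c z <= r /\ g z < - INR n).
  { intros n. apply NNPP. intros hn. apply Hno. exists (- INR n). intros z hz.
    apply Rnot_lt_le. intros hlt. apply hn. now exists z. }
  destruct (choice _ H) as [u hu].
  destruct (Hbc c r u (fun n => proj1 (hu n))) as [phi [x0 [hinc [_ hconv]]]].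
  destruct (Hg _ _ hconv 1 ltac:(lra)) as [N HN].
  destruct (INR_archimed 1 (1 - g x0) ltac:(lra)) as [n0 hn0].
  specialize (HN (N + n0)%nat ltac:(lia)).
  pose proof (proj2 (hu (phi (N + n0)%nat))) as hneg.
  pose proof (le_INR _ _ (strict_incr_ge_id phi hinc (N + n0)%nat)) as hge.
  rewrite plus_INR in hge. pose proof (pos_INR N). lra.
Qed.

Lemma lsc_attains_min_on_ball (g : G -> R) : lsc d g ->
  forall c r, 0 <= r ->
  exists p, d c p <= r /\ forall z, d c z <= r -> g p <= g z.
Proof.
  intros Hg c r Hr.
  destruct (lsc_bounded_below_on_ball g Hg c r) as [m Hm].
  set (E := fun s => exists z, d c z <= r /\ s = - g z).
  assert (hEb : bound E).
  { exists (- m). intros s [z [hz ->]]. specialize (Hm z hz). lra. }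
  assert (hEn : exists s, E s).
  { exists (- g c), c. split; [rewrite (dist_refl G d Hmetric); lra | reflexivity]. }
  destruct (completeness E hEb hEn) as [M [HMub HMlub]].
  assert (HI : forall z, d c z <= r -> - M <= g z).
  { intros z hz. pose proof (HMub (- g z) (ex_intro _ z (conj hz eq_refl))). lra. }
  assert (Hseq : forall n : nat, exists z, d c z <= r /\ g z < - M + / (INR n + 1)).
  { intros n. apply NNPP. intros hn.
    assert (heps : 0 < / (INR n + 1)) by (apply Rinv_0_lt_compat; pose proof (pos_INR n); lra).
    assert (hub : is_upper_bound E (M - / (INR n + 1))).
    { intros s [z [hz ->]]. apply Rnot_lt_le. intros hlt. apply hn. exists z. split; [exact hz | lra]. }
    specialize (HMlub _ hub). lra. }
  destruct (choice _ Hseq) as [u hu].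
  destruct (Hbc c r u (fun n => proj1 (hu n))) as [phi [p [hinc [hp hconv]]]].
  exists p. split; [exact hp |]. intros z hz.
  enough (g p <= - M) by (specialize (HI z hz); lra).
  apply Rnot_lt_le. intros hlt. set (e := (g p + M) / 2).
  destruct (Hg _ _ hconv e ltac:(unfold e; lra)) as [N HN].
  destruct (archimed_cor1 e ltac:(unfold e; lra)) as [n0 [hn0 hn0pos]].
  specialize (HN (N + n0)%nat ltac:(lia)).
  pose proof (proj2 (hu (phi (N + n0)%nat))) as hlt'.
  pose proof (strict_incr_ge_id phi hinc (N + n0)%nat) as hge.
  assert (hinv : / (INR (phi (N + n0)%nat) + 1) <= / INR n0).
  { apply Rinv_le_contravar; [apply lt_0_INR; lia |].
    rewrite <- S_INR. apply le_INR. lia. }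
  unfold e in *. lra.
Qed.

End LowerSemicontinuity.

Section Prox.

Variables (G : Type) (d : G -> G -> R).
Hypothesis Hmetric : is_metric d.
Hypothesis Hgeo : uniquely_geodesic d.
Variables (f : G -> R) (lam : R).
Hypothesis Hf_convex : convex_fun d f.
Hypothesis Hlam : 0 < lam.

(* Apply convexity at the point of [x, z] at distance 1 from x, which lies in
   the unit ball. *)
Lemma convex_affine_minorant x m1 : (forall z, d x z <= 1 -> m1 <= f z) ->
  forall z, m1 - (f x - m1) * d x z <= f z.
Proof.
  intros Hb z.
  assert (hK : 0 <= f x - m1).
  { pose proof (Hb x) as h. rewrite (dist_refl G d Hmetric) in h. lra. }
  pose proof (dist_ge0 G d Hmetric x z) as hD.
  destruct (Rle_or_lt (d x z) 1) as [h | h]; [specialize (Hb z h); nra |].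
  set (D := d x z) in *. set (t := / D).
  assert (ht : 0 <= t <= 1).
  { unfold t. split; [left; apply Rinv_0_lt_compat; lra |].
    rewrite <- Rinv_1. apply Rinv_le_contravar; lra. }
  assert (hDt : D * t = 1) by (unfold t; field; lra).
  assert (hw : d x (geo_comb d x z t) <= 1).
  { rewrite (proj1 (dist_geo_comb G d Hmetric Hgeo x z t ht)). fold D. lra. }
  pose proof (Hb _ hw) as hb.
  pose proof (Hf_convex t x z ht) as hf.
  assert (D * m1 <= D * ((1 - t) * f x + t * f z)) by (apply Rmult_le_compat_l; lra).
  replace (D * ((1 - t) * f x + t * f z)) with (D * f x - (D * t) * f x + (D * t) * f z)
    in * by ring.
  rewrite hDt in *. nra.
Qed.

Hypothesis Hconv : unif_convex_2 d.

(* Compare p with the points of the geodesic from p to z, and let them tend to p. *)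
Lemma prox_point_variational_ineq x p : is_prox_point d f lam x p ->
  forall z, f p + d p x ^ 2 / (2 * lam) + d p z ^ 2 / (2 * lam) <=
            f z + d z x ^ 2 / (2 * lam).
Proof.
  intros Hp z.
  set (c := / (2 * lam)).
  assert (hc : 0 < c) by (apply Rinv_0_lt_compat; lra).
  unfold Rdiv in *. fold c.
  enough (d p z ^ 2 * c <= f z + d z x ^ 2 * c - f p - d p x ^ 2 * c) by lra.
  apply le_of_forall_one_minus_mul_le. intros t Ht.
  set (w := geo_comb d p z t).
  pose proof (Hp w) as hmin. unfold Rdiv in hmin. fold c in hmin.
  pose proof (Hf_convex t p z ltac:(lra)) as hf. fold w in hf.
  pose proof (Hconv t p z x ltac:(lra)) as hd. fold w in hd.
  rewrite (sqr_dist_sym G d Hmetric x w), (sqr_dist_sym G d Hmetric x p),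
    (sqr_dist_sym G d Hmetric x z) in hd.
  pose proof (Rmult_le_compat_r c _ _ (Rlt_le _ _ hc) hd) as hdc.
  apply Rmult_le_reg_l with t; [lra |]. nra.
Qed.

Lemma quad_firm_prox_points x y p q :
  is_prox_point d f lam x p -> is_prox_point d f lam y q -> quad_firm G d x y p q.
Proof.
  intros Hp Hq. unfold quad_firm.
  pose proof (prox_point_variational_ineq x p Hp q) as hp.
  pose proof (prox_point_variational_ineq y q Hq p) as hq.
  rewrite (sqr_dist_sym G d Hmetric p x), (sqr_dist_sym G d Hmetric q x) in hp.
  rewrite (sqr_dist_sym G d Hmetric q y), (sqr_dist_sym G d Hmetric q p),
    (sqr_dist_sym G d Hmetric p y) in hq.
  assert (h : (d x p ^ 2 + d y q ^ 2 + 2 * d p q ^ 2) / (2 * lam) <=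
              (d x q ^ 2 + d y p ^ 2) / (2 * lam)).
  { unfold Rdiv in *. lra. }
  apply Rmult_le_reg_r with (/ (2 * lam)); [apply Rinv_0_lt_compat; lra | exact h].
Qed.

Hypothesis Hbc : boundedly_compact d.
Hypothesis Hf_lsc : lsc d f.

Lemma prox_point_exists x : exists p, is_prox_point d f lam x p.
Proof.
  set (g := fun z => f z + d z x ^ 2 / (2 * lam)).
  destruct (lsc_bounded_below_on_ball G d Hbc f Hf_lsc x 1) as [m Hm].
  pose proof (convex_affine_minorant x m Hm) as Haff.
  set (K := f x - m) in Haff.
  assert (hK : 0 <= K).
  { pose proof (Hm x) as h. rewrite (dist_refl G d Hmetric) in h. unfold K. lra. }
  set (r := 4 * lam * K + 1).
  assert (Hfar : forall z, r < d x z -> f x < g z).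
  { intros z hz. unfold g. rewrite (dist_sym G d Hmetric z x).
    set (D := d x z) in *. specialize (Haff z). fold D in Haff.
    assert (K + K * D < D ^ 2 / (2 * lam)).
    { assert (2 * lam * (K + K * D) < D ^ 2).
      { unfold r in hz. assert (0 <= lam * K) by nra.
        assert (D * (4 * lam * K + 1) < D * D) by (apply Rmult_lt_compat_l; lra).
        nra. }
      apply Rmult_lt_reg_l with (2 * lam); [lra |].
      replace (2 * lam * (D ^ 2 / (2 * lam))) with (D ^ 2) by (field; lra). lra. }
    unfold K in *. lra. }
  assert (Hg : lsc d g).
  { apply (lsc_plus G d); [exact Hf_lsc |].
    apply (lsc_div G d (fun z => d z x ^ 2)); [lra | apply (lsc_sqr_dist G d Hmetric)]. }
  destruct (lsc_attains_min_on_ball G d Hmetric Hbc g Hg x r ltac:(unfold r; nra))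
    as [p [hp Hmin]].
  exists p. intros z. fold (g p) (g z).
  destruct (Rle_or_lt (d x z) r) as [hz | hz]; [exact (Hmin z hz) |].
  pose proof (Hmin x ltac:(rewrite (dist_refl G d Hmetric); unfold r; nra)) as hx.
  unfold g at 2 in hx. rewrite (dist_refl G d Hmetric) in hx.
  specialize (Hfar z hz). unfold Rdiv in hx. lra.
Qed.

Lemma prox_is_prox_point x : is_prox_point d f lam x (prox d f lam x).
Proof.
  unfold prox. destruct (excluded_middle_informative _) as [h | h].
  - exact (proj2_sig (constructive_indefinite_description _ h)).
  - exfalso. exact (h (prox_point_exists x)).
Qed.

End Prox.

Theorem mainTheorem15 (G : Type) (d : G -> G -> R)
  (Hmetric : is_metric d) (Hgeo : uniquely_geodesic d)
  (Hconv : unif_convex_2 d) (Hbc : boundedly_compact d)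
  (f : G -> R) (Hf_convex : convex_fun d f) (Hf_lsc : lsc d f)
  (lam : R) (Hlam : 0 < lam) (tau : R) (Htau : 0 < tau <= 1 / 2) :
  forall x y : G,
    (d (T_relax d f lam tau x) (T_relax d f lam tau y))^2 <=
      (d x y)^2 - tau / (1 - tau) *
        psi22 d x y (T_relax d f lam tau x) (T_relax d f lam tau y).
Proof.
  intros x y.
  pose proof (prox_is_prox_point G d Hmetric Hgeo f lam Hf_convex Hlam Hbc Hf_lsc)
    as Hprox.
  pose proof (quad_firm_prox_points G d Hmetric f lam Hf_convex Hlam Hconv
    x y _ _ (Hprox x) (Hprox y)) as Hfirm.
  apply (quad_firm_geo_comb G d Hmetric Hgeo Hconv _ _ _ _ tau ltac:(lra)) in Hfirm.
  fold (T_relax d f lam tau x) (T_relax d f lam tau y) in Hfirm.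
  apply (psi22_le_of_quad_firm G d Hmetric) in Hfirm.
  pose proof (psi22_ge0 G d Hmetric Hconv x y
    (T_relax d f lam tau x) (T_relax d f lam tau y)) as Hpsi.
  assert (hk : 0 <= tau / (1 - tau) <= 1).
  { split.
    - apply Rmult_le_pos; [lra | apply Rlt_le, Rinv_0_lt_compat; lra].
    - apply Rmult_le_reg_r with (1 - tau); [lra |].
      unfold Rdiv. rewrite Rmult_assoc, Rinv_l by lra. lra. }
  nra.
Qed.
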